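(* Let $\mathbf{w} = (w_1, w_2, \ldots)$ be an arbitrary sequence of elements of $A^+$ (with $A=\{a,b\}$) such that $a \notin S_{\mathbf{w}}$ and $b \notin S_{\mathbf{w}}$. Then either $w_n \in aA^*b$ for all $n$ and $S_{\mathbf{w}} \subseteq aA^*b \cup \{\varepsilon\}$, or $w_n \in bA^*a$ for all $n$ and $S_{\mathbf{w}} \subseteq bA^*a \cup \{\varepsilon\}$.
   Context: $A = \{a,b\}$; $A^*$ is the free monoid on $A$ with empty word $\varepsilon$, and $A^+ = A^*\setminus\{\varepsilon\}$. For a sequence $\mathbf{w}=(w_1,w_2,\ldots)$ in $A^+$, $S_{\mathbf{w}}$ is the least submonoid $S$ of $A^*$ satisfying: (C1) if $w_n = s v u v s'$ for some $n$, with $s, s' \in S$ and $u, v \in A^*$, then $v \in S$; (C2) if $w_m = s v t$ and $w_n = t' v s'$ for some $m \neq n$, with $s, s' \in S$ and $t, t', v \in A^*$, then $v \in S$. (Intersections of such submonoids again satisfy (C1),(C2), and $A^*$ satisfies them, so the least one exists.) *)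

From mathcomp Require Import all_boot.
Set Implicit Arguments. Unset Strict Implicit. Unset Printing Implicit Defensive.

Inductive letter := la | lb.

Definition word := seq letter.

Definition submonoid (S : word -> Prop) : Prop :=
  S [::] /\ forall u v, S u -> S v -> S (u ++ v).

Definition cond1 (w : nat -> word) (S : word -> Prop) : Prop :=
  forall n (s s' u v : word), S s -> S s' ->
    w n = s ++ v ++ u ++ v ++ s' -> S v.

Definition cond2 (w : nat -> word) (S : word -> Prop) : Prop :=
  forall m n (s s' t t' v : word), m <> n -> S s -> S s' ->
    w m = s ++ v ++ t -> w n = t' ++ v ++ s' -> S v.

(* S_w : the least submonoid satisfying (C1) and (C2), i.e. the intersection
   of all of them. *)
Definition Sw (w : nat -> word) (x : word) : Prop :=
  forall S : word -> Prop, submonoid S -> cond1 w S -> cond2 w S -> S x.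

Definition in_cAd (c d : letter) (x : word) : Prop :=
  exists y : word, x = c :: y ++ [:: d].

(* If no letter lies in S_w, (C2) with v a single letter forbids the first
   letter of w_m to be the last letter of w_n for m <> n, and (C1) forbids w_n
   to start and end with the same letter.  Over a two-letter alphabet this puts
   every w_n in c A^* d for fixed letters c <> d.  The same argument, with s or
   s' now an arbitrary element of S_w, shows that every factor v <> epsilon
   forced into S_w by (C1) or (C2) starts with c and ends with d.  Hence
   S_w intersected with c A^* d + {epsilon} is again a submonoid satisfying
   (C1) and (C2), and by minimality it is all of S_w. *)
From Stdlib Require Import Lia.
From mathcomp Require Import all_boot.

Lemma Sw_submonoid (w : nat -> word) : submonoid (Sw w).
Proof.
split=> [S [S_nil _] //|u v Su Sv S SS S1 S2].
by case: (SS) => _; apply; [apply: Su | apply: Sv].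
Qed.

Lemma Sw_nil (w : nat -> word) : Sw w [::].
Proof. by case: (Sw_submonoid w). Qed.

Lemma Sw_cond1 (w : nat -> word) : cond1 w (Sw w).
Proof.
move=> n s s' u v Ss Ss' Ewn S SS S1 S2.
by apply: (S1 n s s' u v) => //; [apply: Ss | apply: Ss'].
Qed.

Lemma Sw_cond2 (w : nat -> word) : cond2 w (Sw w).
Proof.
move=> m n s s' t t' v mn Ss Ss' Ewm Ewn S SS S1 S2.
by apply: (S2 m n s s' t t' v) => //; [apply: Ss | apply: Ss'].
Qed.

Lemma letter_other_eq {x y z : letter} : x <> y -> x <> z -> y = z.
Proof. by case: x; case: y; case: z. Qed.

Lemma in_cAd_cat (c d : letter) (u v : word) :
  in_cAd c d u -> in_cAd c d v -> in_cAd c d (u ++ v).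
Proof. by move=> [y ->] [z ->]; exists (y ++ d :: c :: z); rewrite /= -!catA. Qed.

Lemma in_cAd_ends (c d : letter) (v : word) : c <> d -> v <> [::] ->
  (forall e t, v = e :: t -> e = c) -> (forall e t, v = t ++ [:: e] -> e = d) ->
  in_cAd c d v.
Proof.
case: v => [//|e v] cd _ head_c last_d; have ec := head_c e v erefl; subst e.
case/lastP: v head_c last_d => [|v f] _ last_d.
  by case: cd; apply: (last_d c [::]).
exists v; rewrite -cats1 (last_d f (c :: v)) //.
by rewrite -cats1.
Qed.

Section NoLetterInSw.

Variable w : nat -> word.
Hypothesis w_nonempty : forall n, w n <> [::].
Hypothesis Sw_no_letter : forall e, ~ Sw w [:: e].

Lemma first_neq_last {m n e f y z} :
  m <> n -> w m = e :: y -> w n = z ++ [:: f] -> e <> f.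
Proof.
move=> mn Ewm Ewn ef; subst f; apply: (Sw_no_letter e).
exact: (Sw_cond2 w m n [::] [::] y z [:: e] mn (Sw_nil w) (Sw_nil w) Ewm Ewn).
Qed.

Lemma first_neq_last_same {n e f y} : w n = e :: y ++ [:: f] -> e <> f.
Proof.
move=> Ewn ef; subst f; apply: (Sw_no_letter e).
apply: (Sw_cond1 w n [::] [::] y [:: e] (Sw_nil w) (Sw_nil w)).
by rewrite Ewn cats0.
Qed.

Lemma w_first_last n : exists e f y z, w n = e :: y /\ w n = z ++ [:: f].
Proof.
case Ewn: (w n) => [|e y]; first by case: (w_nonempty n).
case/lastP: y Ewn => [|z f] _; first by exists e, e, [::], [::].
by exists e, f, (rcons z f), (e :: z); rewrite -cats1.
Qed.

(* Three pairwise distinct letters would be needed: the first letter of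
   w_(n+1), the letter w_n itself and the last letter of w_(n+2). *)
Lemma w_neq_letter {n e} : w n <> [:: e].
Proof.
move=> Ewn.
have [e1 [_ [y1 [_ [Ew1 _]]]]] := w_first_last n.+1.
have [_ [f2 [_ [z2 [_ Ew2]]]]] := w_first_last n.+2.
have e1e : e1 <> e by apply: (first_neq_last (z := [::]) _ Ew1 Ewn); lia.
have ef2 : e <> f2 by apply: (first_neq_last (y := [::]) _ Ewn Ew2); lia.
have e1f2 : e1 <> f2 by apply: (first_neq_last _ Ew1 Ew2); lia.
by apply: e1f2; apply: (letter_other_eq (x := e)) => // ee1; apply: e1e.
Qed.

Lemma w_shape n : exists e f y, w n = e :: y ++ [:: f].
Proof.
case Ewn: (w n) => [|e y]; first by case: (w_nonempty n).
case/lastP: y Ewn => [|y f] Ewn; first by case: (w_neq_letter Ewn).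
by exists e, f, y; rewrite -cats1.
Qed.

Lemma w_in_cAd_uniform : exists c d, c <> d /\ forall n, in_cAd c d (w n).
Proof.
have [c [d [y0 Ew0]]] := w_shape 0.
have cd : c <> d := first_neq_last_same Ew0.
exists c, d; split=> // -[|n]; first by exists y0.
have [e [f [y Ewn]]] := w_shape n.+1.
have ed : e <> d by apply: (first_neq_last (z := c :: y0) _ Ewn Ew0).
have cf : c <> f by apply: (first_neq_last (z := e :: y) _ Ew0 Ewn).
exists y; rewrite Ewn (letter_other_eq cf cd).
by rewrite (@letter_other_eq d e c) // => /esym.
Qed.

End NoLetterInSw.

Section UniformEnds.

Variables (w : nat -> word) (c d : letter).
Hypothesis cd : c <> d.
Hypothesis w_in_cAd : forall n, in_cAd c d (w n).
Hypothesis c_notin_Sw : ~ Sw w [:: c].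
Hypothesis d_notin_Sw : ~ Sw w [:: d].

(* A d right after a prefix in S_w would pair, via (C2), with the final d of
   another word. *)
Lemma Sw_prefix_next {n s e t} : Sw w s -> w n = s ++ e :: t -> e = c.
Proof.
move=> Ss Ewn; apply: (letter_other_eq (x := d)) => [de | /esym //]; subst e.
have [y Ew1] := w_in_cAd n.+1; apply: d_notin_Sw.
by apply: (Sw_cond2 w n n.+1 s [::] t (c :: y) [:: d] _ Ss (Sw_nil w) Ewn Ew1); lia.
Qed.

Lemma Sw_suffix_prev {n s e t} : Sw w s -> w n = t ++ e :: s -> e = d.
Proof.
move=> Ss Ewn; apply: (letter_other_eq (x := c)) => // ce; subst e.
have [y Ew1] := w_in_cAd n.+1; apply: c_notin_Sw.
by apply: (Sw_cond2 w n.+1 n [::] s (y ++ [:: d]) t [:: c] _ (Sw_nil w) Ss Ew1 Ewn); lia.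
Qed.

Lemma Sw_factor_in_cAd {m n s s' t t' v} : Sw w s -> Sw w s' -> v <> [::] ->
  w m = s ++ v ++ t -> w n = t' ++ v ++ s' -> in_cAd c d v.
Proof.
move=> Ss Ss' v_nil Ewm Ewn; apply: in_cAd_ends => // e u Ev; subst v.
  by apply: (Sw_prefix_next (n := m) (t := u ++ t) Ss); rewrite Ewm.
by apply: (Sw_suffix_prev (n := n) (t := t' ++ u) Ss'); rewrite Ewn -!catA.
Qed.

Lemma Sw_sub_cAd x : Sw w x -> in_cAd c d x \/ x = [::].
Proof.
pose S y := Sw w y /\ (in_cAd c d y \/ y = [::]).
move=> Sx; suff [_ //] : S x.
apply: Sx => [|n s s' u v [Ss _] [Ss' _] Ewn|m n s s' t t' v mn [Ss _] [Ss' _] Ewm Ewn].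
- split=> [|u v [Su cAd_u] [Sv cAd_v]]; first by split; [exact: Sw_nil | right].
  split; first by case: (Sw_submonoid w) => _; apply.
  case: cAd_u => [cAd_u|->] //; case: cAd_v => [cAd_v|->]; last by rewrite cats0; left.
  by left; apply: in_cAd_cat.
- split; first exact: (Sw_cond1 w n s s' u v Ss Ss' Ewn).
  case: v Ewn => [|e v] Ewn; [by right | left].
  apply: (Sw_factor_in_cAd (n := n) (t' := s ++ (e :: v) ++ u) Ss Ss' _ Ewn) => //.
  by rewrite Ewn -!catA.
- split; first exact: (Sw_cond2 w m n s s' t t' v mn Ss Ss' Ewm Ewn).
  case: v Ewm Ewn => [|e v] Ewm Ewn; [by right | left].
  exact: Sw_factor_in_cAd Ss Ss' _ Ewm Ewn.
Qed.

End UniformEnds.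

Theorem lemma3p4 (w : nat -> word) :
  (forall n, w n <> [::]) ->
  ~ Sw w [:: la] -> ~ Sw w [:: lb] ->
  ((forall n, in_cAd la lb (w n)) /\
     (forall x, Sw w x -> in_cAd la lb x \/ x = [::]))
  \/
  ((forall n, in_cAd lb la (w n)) /\
     (forall x, Sw w x -> in_cAd lb la x \/ x = [::])).
Proof.
move=> w_nonempty not_a not_b.
have no_letter : forall e, ~ Sw w [:: e] by case.
have [c [d [cd w_cAd]]] := w_in_cAd_uniform w w_nonempty no_letter.
have Sw_cAd := Sw_sub_cAd w c d cd w_cAd (no_letter c) (no_letter d).
by case: c d cd w_cAd Sw_cAd => -[] // _ w_cAd Sw_cAd; [left | right].
Qed.
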